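(* For every set of formulas $\Gamma$ and every formula $\varphi$: $\Gamma\vdash_{\mathsf{NeL}}\varphi$ iff $\Gamma\models_{\mathfrak{N}_w}\varphi$.
   Context: Formulas are built from a countably infinite set of variables using binary $\otimes,\circ$ and unary ${}^{*}$; $\mathbf{Fm}$ is the formula algebra. Abbreviations (also used as term operations in algebras): $\varphi\Rightarrow\psi:=(\varphi\circ\psi^{*})^{*}$; $\varphi\Leftrightarrow\psi:=(\varphi\Rightarrow\psi)\otimes(\psi\Rightarrow\varphi)$; $\varphi\not\Leftrightarrow\psi:=(\varphi\Leftrightarrow\psi)^{*}$; $\varphi\not\Leftrightarrow\psi\not\Leftrightarrow\chi:=((\varphi\not\Leftrightarrow\psi)\otimes(\varphi\not\Leftrightarrow\chi))\otimes(\psi\not\Leftrightarrow\chi)$. $\mathsf{NeL}$: axiom schemes (A1) $\varphi\Rightarrow\varphi$; (A2) $(\varphi\circ\psi)\Rightarrow(\psi\circ\varphi)$; (A3) $\varphi\Rightarrow\varphi^{**}$; (A4) $(\varphi\Rightarrow\psi)\Rightarrow(\varphi\circ\psi)$; (A5) $(\varphi\otimes\psi)\Leftrightarrow(\psi\otimes\varphi)$; (A6) $((\varphi\otimes\psi)\Rightarrow\chi)\Rightarrow((\varphi\otimes\chi^{*})\Rightarrow\psi^{*})$; (A7) $(\varphi\not\Leftrightarrow\psi\not\Leftrightarrow\chi)\Rightarrow((\varphi\Rightarrow\psi)\Rightarrow((\psi\Rightarrow\chi)\Rightarrow(\varphi\Rightarrow\chi)))$; rules (applicable to arbitrary formulas)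 $\varphi\Rightarrow\psi,\varphi/\psi$; $\varphi,\psi/\varphi\otimes\psi$; $\varphi\Leftrightarrow\psi,\chi/\chi'$ ($\chi'$ obtained from $\chi$ by replacing one or more occurrences of $\varphi$ by $\psi$); $\varphi\otimes\psi/\varphi$. $\Gamma\vdash_{\mathsf{NeL}}\varphi$ means $\varphi$ is derivable from $\Gamma$ and axiom instances by these rules. A weak $\mathcal{N}$-algebra is an algebra $(A,\otimes,\circ,{}^{*})$ of type $(2,2,1)$ with $\otimes$ and $\circ$ commutative, $x^{**}=x$, and $(x\otimes y)\circ z=(x\otimes z)\circ y$. Let $\mathsf{t}\neq\mathsf{f}$ be two symbols not in $A$, $\overline{A}=A\cup\{\mathsf{t},\mathsf{f}\}$. An $\mathfrak{N}_w$-model is $(\mathbf A,\perp,\{\mathsf{t},\mathsf{f}\})$ with $\mathbf A$ a weak $\mathcal{N}$-algebra and $\perp\subseteq\overline{A}\times\overline{A}$ such that for all $x,y,z\in A$: (a) $x\perp x^{*}$; (b) $x\perp y^{*}$ and $y\perp x^{*}$ imply $x=y$; (c) $x\perp y$ iff $x\circ y\perp\mathsf{t}$; (d) $x\perp\mathsf{t}$ iff $x^{*}\perp\mathsf{f}$; (e) $x\perp\mathsf{f}$ and $y\perp\mathsf{f}$ iff $x\otimes y\perp\mathsf{f}$; (f) $(x\circ y^{*})^{*}\perp(x\circ y)^{*}$; (g) $x\perp y$ and $x\perp\mathsf{f}$ imply $y\perp\mathsf{t}$; (h) $(x\not\Leftrightarrow y\not\Leftrightarrow z)\perp((x\Rightarrow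 y)\Rightarrow((y\Rightarrow z)\Rightarrow(x\Rightarrow z)))^{*}$. $\mathfrak{N}_w$ is the class of all such models; $F_\perp=\{a\in A:a\perp\mathsf{f}\}$. $\Gamma\models_{\mathfrak{N}_w}\varphi$ iff there is a finite $\Gamma'\subseteq\Gamma$ such that for every $\mathfrak{N}_w$-model and every homomorphism $h:\mathbf{Fm}\to\mathbf A$, $h(\Gamma')\subseteq F_\perp$ implies $h(\varphi)\in F_\perp$. *)

From Stdlib Require Import List.
Import ListNotations.

Inductive fm : Type :=
| Var : nat -> fm
| Ot : fm -> fm -> fm
| Ci : fm -> fm -> fm
| St : fm -> fm.

Definition fimp (a b : fm) : fm := St (Ci a (St b)).
Definition fiff (a b : fm) : fm := Ot (fimp a b) (fimp b a).
Definition fniff (a b : fm) : fm := St (fiff a b).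
Definition fniff3 (a b c : fm) : fm := Ot (Ot (fniff a b) (fniff a c)) (fniff b c).

Inductive repl1 (p q : fm) : fm -> fm -> Prop :=
| r1_hit : repl1 p q p q
| r1_Ot_l : forall a a' b, repl1 p q a a' -> repl1 p q (Ot a b) (Ot a' b)
| r1_Ot_r : forall a b b', repl1 p q b b' -> repl1 p q (Ot a b) (Ot a b')
| r1_Ot_b : forall a a' b b', repl1 p q a a' -> repl1 p q b b' ->
    repl1 p q (Ot a b) (Ot a' b')
| r1_Ci_l : forall a a' b, repl1 p q a a' -> repl1 p q (Ci a b) (Ci a' b)
| r1_Ci_r : forall a b b', repl1 p q b b' -> repl1 p q (Ci a b) (Ci a b')
| r1_Ci_b : forall a a' b b', repl1 p q a a' -> repl1 p q b b' ->
    repl1 p q (Ci a b) (Ci a' b')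
| r1_St : forall a a', repl1 p q a a' -> repl1 p q (St a) (St a').

Inductive NeL_axiom : fm -> Prop :=
| A1 : forall a, NeL_axiom (fimp a a)
| A2 : forall a b, NeL_axiom (fimp (Ci a b) (Ci b a))
| A3 : forall a, NeL_axiom (fimp a (St (St a)))
| A4 : forall a b, NeL_axiom (fimp (fimp a b) (Ci a b))
| A5 : forall a b, NeL_axiom (fiff (Ot a b) (Ot b a))
| A6 : forall a b c,
    NeL_axiom (fimp (fimp (Ot a b) c) (fimp (Ot a (St c)) (St b)))
| A7 : forall a b c,
    NeL_axiom (fimp (fniff3 a b c)
                 (fimp (fimp a b) (fimp (fimp b c) (fimp a c)))).

Inductive NeL_derivable (Gamma : fm -> Prop) : fm -> Prop :=
| d_hyp : forall a, Gamma a -> NeL_derivable Gamma a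
| d_ax : forall a, NeL_axiom a -> NeL_derivable Gamma a
| d_mp : forall a b, NeL_derivable Gamma (fimp a b) -> NeL_derivable Gamma a ->
    NeL_derivable Gamma b
| d_adj : forall a b, NeL_derivable Gamma a -> NeL_derivable Gamma b ->
    NeL_derivable Gamma (Ot a b)
| d_repl : forall a b c c', NeL_derivable Gamma (fiff a b) ->
    NeL_derivable Gamma c -> repl1 a b c c' -> NeL_derivable Gamma c'
| d_simp : forall a b, NeL_derivable Gamma (Ot a b) -> NeL_derivable Gamma a.

Inductive bar (A : Type) : Type :=
| El : A -> bar A
| Tt : bar A
| Ff : bar A.
Arguments El {A} _.
Arguments Tt {A}.
Arguments Ff {A}.

Section Ops.
Variables (A : Type) (otm cir : A -> A -> A) (st : A -> A).
Definition aimp (x y : A) : A := st (cir x (st y)).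
Definition aiff (x y : A) : A := otm (aimp x y) (aimp y x).
Definition aniff (x y : A) : A := st (aiff x y).
Definition aniff3 (x y z : A) : A := otm (otm (aniff x y) (aniff x z)) (aniff y z).
End Ops.

Record NwModel (A : Type) : Type := {
  otm : A -> A -> A;
  cir : A -> A -> A;
  st : A -> A;
  perp : bar A -> bar A -> Prop;
  otm_comm : forall x y, otm x y = otm y x;
  cir_comm : forall x y, cir x y = cir y x;
  st_inv : forall x, st (st x) = x;
  otm_cir : forall x y z, cir (otm x y) z = cir (otm x z) y;
  ax_a : forall x, perp (El x) (El (st x));
  ax_b : forall x y, perp (El x) (El (st y)) -> perp (El y) (El (st x)) -> x = y;
  ax_c : forall x y, perp (El x) (El y) <-> perp (El (cir x y)) Tt;
  ax_d : forall x, perp (El x) Tt <-> perp (El (st x)) Ff;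
  ax_e : forall x y, (perp (El x) Ff /\ perp (El y) Ff) <-> perp (El (otm x y)) Ff;
  ax_f : forall x y, perp (El (st (cir x (st y)))) (El (st (cir x y)));
  ax_g : forall x y, perp (El x) (El y) -> perp (El x) Ff -> perp (El y) Tt;
  ax_h : forall x y z,
    perp (El (aniff3 A otm cir st x y z))
         (El (st (aimp A cir st (aimp A cir st x y)
                   (aimp A cir st (aimp A cir st y z) (aimp A cir st x z)))))
}.

Arguments otm {A} _ _ _.
Arguments cir {A} _ _ _.
Arguments st {A} _ _.
Arguments perp {A} _ _ _.

Definition Fperp {A : Type} (M : NwModel A) (a : A) : Prop := perp M (El a) Ff.

Definition is_hom {A : Type} (M : NwModel A) (h : fm -> A) : Prop :=
  (forall a b, h (Ot a b) = otm M (h a) (h b)) /\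
  (forall a b, h (Ci a b) = cir M (h a) (h b)) /\
  (forall a, h (St a) = st M (h a)).

Definition Nw_consequence (Gamma : fm -> Prop) (phi : fm) : Prop :=
  exists Gamma' : list fm,
    (forall g, In g Gamma' -> Gamma g) /\
    forall (A : Type) (M : NwModel A) (h : fm -> A),
      is_hom M h ->
      (forall g, In g Gamma' -> Fperp M (h g)) -> Fperp M (h phi).

(* Soundness: each axiom of NeL is valid in every N_w-model, by (a) after
   rewriting with the weak N-algebra laws (or by (f), (h) directly), and the
   rules preserve membership in F_perp by (e) (adjunction, simplification),
   (c), (d), (g) (modus ponens) and (b) (replacement: provably equivalent
   formulas get equal values).
   Completeness: the Lindenbaum-Tarski algebra of Gamma, formulas modulo
   Gamma |- phi <=> psi, is an N_w-model when x perp y, x perp t and x perp f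
   are read as Gamma |- (x o y)^*, Gamma |- x^* and Gamma |- x; under the
   quotient map a formula lies in F_perp exactly when it is derivable. *)
From Stdlib Require Import List Setoid ClassicalEpsilon FunctionalExtensionality
  PropExtensionality ProofIrrelevance.
Import ListNotations.

Section Soundness.
Variables (A : Type) (M : NwModel A) (h : fm -> A).
Hypothesis h_hom : is_hom M h.

Lemma hom_fimp a b : h (fimp a b) = aimp A (cir M) (st M) (h a) (h b).
Proof. destruct h_hom as (_ & hCi & hSt); unfold fimp; now rewrite hSt, hCi, hSt. Qed.

Lemma Fperp_fimp a b :
  Fperp M (h (fimp a b)) <-> perp M (El (h a)) (El (st M (h b))).
Proof. rewrite hom_fimp; unfold Fperp, aimp; now rewrite <- ax_d, <- ax_c. Qed.

Lemma Fperp_Ot a b : Fperp M (h (Ot a b)) <-> Fperp M (h a) /\ Fperp M (h b).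
Proof. destruct h_hom as (hOt & _); unfold Fperp; now rewrite hOt, <- ax_e. Qed.

Lemma NeL_axiom_sound a : NeL_axiom a -> Fperp M (h a).
Proof.
  destruct h_hom as (hOt & hCi & hSt).
  destruct 1; apply Fperp_fimp || apply Fperp_Ot.
  - apply ax_a.
  - rewrite !hCi, (cir_comm _ M (h b)); apply ax_a.
  - rewrite !hSt, st_inv; apply ax_a.
  - rewrite hom_fimp, hCi; apply ax_f.
  - split; apply Fperp_fimp; rewrite !hOt, otm_comm; apply ax_a.
  - rewrite !hom_fimp, !hOt, !hSt; unfold aimp.
    rewrite (st_inv _ M (h b)), otm_cir; apply ax_a.
  - unfold fniff3, fniff, fiff.
    repeat (rewrite hom_fimp || rewrite hOt || rewrite hSt); apply ax_h.
Qed.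

Lemma Fperp_mp a b : Fperp M (h (fimp a b)) -> Fperp M (h a) -> Fperp M (h b).
Proof.
  intros Hab Ha; apply Fperp_fimp in Hab.
  apply (ax_g _ M _ _ Hab), ax_d in Ha; now rewrite st_inv in Ha.
Qed.

Lemma Fperp_fiff_eq a b : Fperp M (h (fiff a b)) -> h a = h b.
Proof.
  intros [Hab Hba]%Fperp_Ot; apply Fperp_fimp in Hab, Hba.
  exact (ax_b _ M _ _ Hab Hba).
Qed.

Lemma repl1_hom_eq p q c c' : repl1 p q c c' -> h p = h q -> h c = h c'.
Proof.
  destruct h_hom as (hOt & hCi & hSt).
  intros R E; induction R; rewrite ?hOt, ?hCi, ?hSt; congruence.
Qed.

Lemma Fperp_repl p q c c' :
  repl1 p q c c' -> Fperp M (h (fiff p q)) -> Fperp M (h c) -> Fperp M (h c').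
Proof. intros R Hpq; now rewrite <- (repl1_hom_eq _ _ _ _ R (Fperp_fiff_eq _ _ Hpq)). Qed.

End Soundness.

Lemma Nw_consequence_rule2 Gamma a b c :
  (forall A (M : NwModel A) h, is_hom M h ->
     Fperp M (h a) -> Fperp M (h b) -> Fperp M (h c)) ->
  Nw_consequence Gamma a -> Nw_consequence Gamma b -> Nw_consequence Gamma c.
Proof.
  intros rule [La [HLa Ha]] [Lb [HLb Hb]].
  exists (La ++ Lb); split.
  - intros g [Hg | Hg]%in_app_iff; auto.
  - intros A M h Hh HL.
    apply (rule A M h Hh); [apply Ha | apply Hb]; auto;
      intros g Hg; apply HL, in_app_iff; auto.
Qed.

Lemma NeL_sound Gamma phi : NeL_derivable Gamma phi -> Nw_consequence Gamma phi.
Proof.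
  induction 1 as [a Ha | a Ha | a b _ IHab _ IHa | a b _ IHa _ IHb
                 | p q c c' _ IHpq _ IHc R | a b _ [L [HL Hab]]].
  - exists [a]; split.
    + now intros g [<- | []].
    + intros A M h _ HL; apply HL; now left.
  - exists []; split; [intros g [] | intros A M h Hh _; now apply NeL_axiom_sound].
  - apply (Nw_consequence_rule2 _ _ _ _ (fun A M h Hh => Fperp_mp A M h Hh a b) IHab IHa).
  - apply (Nw_consequence_rule2 _ _ _ _ (fun A M h Hh Ha Hb =>
             proj2 (Fperp_Ot A M h Hh a b) (conj Ha Hb)) IHa IHb).
  - apply (Nw_consequence_rule2 _ _ _ _ (fun A M h Hh => Fperp_repl A M h Hh _ _ _ _ R)
             IHpq IHc).
  - exists L; split; [exact HL |].
    intros A M h Hh HLh; now apply (Fperp_Ot A M h Hh a b), Hab.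
Qed.

Section Lindenbaum_Tarski.
Variable Gamma : fm -> Prop.
Notation D := (NeL_derivable Gamma).

Lemma derivable_Ot_r a b : D (Ot a b) -> D b.
Proof.
  intro Hab; apply (d_simp _ b a).
  exact (d_repl _ _ _ _ _ (d_ax _ _ (A5 a b)) Hab (r1_hit _ _)).
Qed.

Lemma fiff_refl a : D (fiff a a).
Proof. apply d_adj; apply d_ax, A1. Qed.

Lemma fiff_sym a b : D (fiff a b) -> D (fiff b a).
Proof. intro Hab; apply d_adj; [exact (derivable_Ot_r _ _ Hab) | exact (d_simp _ _ _ Hab)]. Qed.

Lemma fiff_mp a b : D (fiff a b) -> D a -> D b.
Proof. intros Hab Ha; exact (d_repl _ _ _ _ _ Hab Ha (r1_hit a b)). Qed.

(* The replacement rule applied to the right-hand occurrences in [X <=> X]. *)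
Lemma fiff_repl1 p q X Y : D (fiff p q) -> repl1 p q X Y -> D (fiff X Y).
Proof.
  intros Hpq R; apply (d_repl _ _ _ _ _ Hpq (fiff_refl X)).
  apply r1_Ot_b; [apply r1_St, r1_Ci_r, r1_St, R | apply r1_St, r1_Ci_l, R].
Qed.

Lemma fiff_trans a b c : D (fiff a b) -> D (fiff b c) -> D (fiff a c).
Proof.
  intros Hab Hbc; apply (d_repl _ _ _ _ _ Hbc Hab).
  apply r1_Ot_b; [apply r1_St, r1_Ci_r, r1_St, r1_hit | apply r1_St, r1_Ci_l, r1_hit].
Qed.

Lemma fiff_Ot a a' b b' : D (fiff a a') -> D (fiff b b') -> D (fiff (Ot a b) (Ot a' b')).
Proof.
  intros Ha Hb; apply (fiff_trans _ (Ot a' b)).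
  - apply (fiff_repl1 _ _ _ _ Ha), r1_Ot_l, r1_hit.
  - apply (fiff_repl1 _ _ _ _ Hb), r1_Ot_r, r1_hit.
Qed.

Lemma fiff_Ci a a' b b' : D (fiff a a') -> D (fiff b b') -> D (fiff (Ci a b) (Ci a' b')).
Proof.
  intros Ha Hb; apply (fiff_trans _ (Ci a' b)).
  - apply (fiff_repl1 _ _ _ _ Ha), r1_Ci_l, r1_hit.
  - apply (fiff_repl1 _ _ _ _ Hb), r1_Ci_r, r1_hit.
Qed.

Lemma fiff_St a a' : D (fiff a a') -> D (fiff (St a) (St a')).
Proof. intro Ha; apply (fiff_repl1 _ _ _ _ Ha), r1_St, r1_hit. Qed.

Lemma fiff_Ci_comm a b : D (fiff (Ci a b) (Ci b a)).
Proof. apply d_adj; apply d_ax, A2. Qed.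

(* (A1) for [a^*], with the two arguments of [o] swapped by (A2). *)
Lemma fiff_St_St a : D (fiff (St (St a)) a).
Proof.
  apply d_adj; [| apply d_ax, A3].
  apply (d_repl _ _ _ _ _ (fiff_Ci_comm (St a) (St (St a))) (d_ax _ _ (A1 (St a)))).
  apply r1_St, r1_hit.
Qed.

(* (A6) with [c := z^*] gives [(x (x) y o z)^* => (x (x) z o y)^*]; by
   symmetry both directions hold, and double negation removes the [^*]. *)
Lemma fiff_Ci_Ot_exchange x y z : D (fiff (Ci (Ot x y) z) (Ci (Ot x z) y)).
Proof.
  assert (exchange_St : forall y z,
            D (fimp (St (Ci (Ot x y) z)) (St (Ci (Ot x z) y)))).
  { intros y' z'.
    refine (fiff_mp _ _ _ (d_ax _ _ (A6 x y' (St z')))).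
    apply fiff_St, fiff_Ci; apply fiff_St.
    - apply fiff_Ci; [apply fiff_refl | apply fiff_St_St].
    - apply fiff_St, fiff_Ci; [apply fiff_Ot; [apply fiff_refl | apply fiff_St_St] | apply fiff_St_St]. }
  apply (fiff_trans _ _ _ (fiff_sym _ _ (fiff_St_St _))).
  apply (fiff_trans _ _ _ (fiff_St _ _ (d_adj _ _ _ (exchange_St y z) (exchange_St z y)))).
  apply fiff_St_St.
Qed.

Definition fiff_class (a : fm) : fm -> Prop := fun b => D (fiff a b).
Definition LT := {P : fm -> Prop | exists a, P = fiff_class a}.
Definition class (a : fm) : LT := exist _ (fiff_class a) (ex_intro _ a eq_refl).
Definition rep (X : LT) : fm :=
  proj1_sig (constructive_indefinite_description _ (proj2_sig X)).

Lemma class_rep X : class (rep X) = X.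
Proof.
  unfold rep; destruct (constructive_indefinite_description _ _) as [a Ha].
  destruct X as [P HP]; simpl in *; subst P.
  now apply subset_eq_compat.
Qed.

Lemma class_eq a b : class a = class b <-> D (fiff a b).
Proof.
  split.
  - intro Eab; apply (f_equal (@proj1_sig _ _)) in Eab; simpl in Eab.
    change (fiff_class a b); rewrite Eab; apply fiff_refl.
  - intro Hab; apply subset_eq_compat.
    extensionality c; apply propositional_extensionality; split.
    + exact (fiff_trans _ _ _ (fiff_sym _ _ Hab)).
    + exact (fiff_trans _ _ _ Hab).
Qed.

Lemma rep_class a : D (fiff (rep (class a)) a).
Proof. apply class_eq, class_rep. Qed.

Lemma LT_surj X : exists a, X = class a.
Proof. exists (rep X); symmetry; apply class_rep. Qed.

Definition LT_otm (X Y : LT) : LT := class (Ot (rep X) (rep Y)).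
Definition LT_cir (X Y : LT) : LT := class (Ci (rep X) (rep Y)).
Definition LT_st (X : LT) : LT := class (St (rep X)).
(* Only pairs with an element on the left are constrained by (a)-(h). *)
Definition LT_perp (u v : bar LT) : Prop :=
  match u, v with
  | El X, El Y => D (St (Ci (rep X) (rep Y)))
  | El X, Tt => D (St (rep X))
  | El X, Ff => D (rep X)
  | _, _ => False
  end.

Lemma LT_otm_class a b : LT_otm (class a) (class b) = class (Ot a b).
Proof. apply class_eq, fiff_Ot; apply rep_class. Qed.
Lemma LT_cir_class a b : LT_cir (class a) (class b) = class (Ci a b).
Proof. apply class_eq, fiff_Ci; apply rep_class. Qed.
Lemma LT_st_class a : LT_st (class a) = class (St a).
Proof. apply class_eq, fiff_St, rep_class. Qed.

Lemma fiff_derivable_iff a b : D (fiff a b) -> D a <-> D b.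
Proof. split; apply fiff_mp; auto using fiff_sym. Qed.

Lemma LT_perp_El a b : LT_perp (El (class a)) (El (class b)) <-> D (St (Ci a b)).
Proof. apply fiff_derivable_iff, fiff_St, fiff_Ci; apply rep_class. Qed.
Lemma LT_perp_Tt a : LT_perp (El (class a)) Tt <-> D (St a).
Proof. apply fiff_derivable_iff, fiff_St, rep_class. Qed.
Lemma LT_perp_Ff a : LT_perp (El (class a)) Ff <-> D a.
Proof. apply fiff_derivable_iff, rep_class. Qed.

Ltac LT_elim :=
  repeat match goal with
  | X : LT |- _ => let a := fresh "a" in
                   destruct (LT_surj X) as [a ->]
  end;
  repeat (rewrite LT_otm_class || rewrite LT_cir_class || rewrite LT_st_class).

Lemma LT_otm_comm X Y : LT_otm X Y = LT_otm Y X.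
Proof. LT_elim; apply class_eq, d_ax, A5. Qed.

Lemma LT_cir_comm X Y : LT_cir X Y = LT_cir Y X.
Proof. LT_elim; apply class_eq, fiff_Ci_comm. Qed.

Lemma LT_st_involutive X : LT_st (LT_st X) = X.
Proof. LT_elim; apply class_eq, fiff_St_St. Qed.

Lemma LT_otm_cir X Y Z : LT_cir (LT_otm X Y) Z = LT_cir (LT_otm X Z) Y.
Proof. LT_elim; apply class_eq, fiff_Ci_Ot_exchange. Qed.

Lemma LT_perp_st X : LT_perp (El X) (El (LT_st X)).
Proof. LT_elim; apply LT_perp_El, d_ax, A1. Qed.

Lemma LT_perp_antisym X Y :
  LT_perp (El X) (El (LT_st Y)) -> LT_perp (El Y) (El (LT_st X)) -> X = Y.
Proof. LT_elim; rewrite !LT_perp_El; intros; apply class_eq, d_adj; assumption. Qed.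

Lemma LT_perp_cir X Y : LT_perp (El X) (El Y) <-> LT_perp (El (LT_cir X Y)) Tt.
Proof. LT_elim; now rewrite LT_perp_El, LT_perp_Tt. Qed.

Lemma LT_perp_Tt_st X : LT_perp (El X) Tt <-> LT_perp (El (LT_st X)) Ff.
Proof. LT_elim; now rewrite LT_perp_Tt, LT_perp_Ff. Qed.

Lemma LT_perp_Ff_otm X Y :
  LT_perp (El X) Ff /\ LT_perp (El Y) Ff <-> LT_perp (El (LT_otm X Y)) Ff.
Proof.
  LT_elim; rewrite !LT_perp_Ff; split.
  - intros [Ha Hb]; now apply d_adj.
  - intro Hab; exact (conj (d_simp _ _ _ Hab) (derivable_Ot_r _ _ Hab)).
Qed.

Lemma LT_perp_imp_cir X Y :
  LT_perp (El (LT_st (LT_cir X (LT_st Y)))) (El (LT_st (LT_cir X Y))).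
Proof. LT_elim; apply LT_perp_El, d_ax, A4. Qed.

Lemma LT_perp_mp X Y : LT_perp (El X) (El Y) -> LT_perp (El X) Ff -> LT_perp (El Y) Tt.
Proof.
  LT_elim; rewrite LT_perp_El, LT_perp_Ff, LT_perp_Tt; intros Hxy Hx.
  refine (d_mp _ _ _ (fiff_mp _ _ _ Hxy) Hx).
  apply fiff_St, fiff_Ci; [apply fiff_refl | apply fiff_sym, fiff_St_St].
Qed.

Lemma LT_perp_fniff3 X Y Z :
  LT_perp (El (aniff3 LT LT_otm LT_cir LT_st X Y Z))
    (El (LT_st (aimp LT LT_cir LT_st (aimp LT LT_cir LT_st X Y)
                 (aimp LT LT_cir LT_st (aimp LT LT_cir LT_st Y Z)
                    (aimp LT LT_cir LT_st X Z))))).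
Proof.
  unfold aniff3, aniff, aiff, aimp; LT_elim.
  apply LT_perp_El, d_ax, A7.
Qed.

Definition LT_model : NwModel LT := {|
  otm := LT_otm; cir := LT_cir; st := LT_st; perp := LT_perp;
  otm_comm := LT_otm_comm; cir_comm := LT_cir_comm;
  st_inv := LT_st_involutive; otm_cir := LT_otm_cir;
  ax_a := LT_perp_st; ax_b := LT_perp_antisym; ax_c := LT_perp_cir;
  ax_d := LT_perp_Tt_st; ax_e := LT_perp_Ff_otm; ax_f := LT_perp_imp_cir;
  ax_g := LT_perp_mp; ax_h := LT_perp_fniff3 |}.

Lemma class_hom : is_hom LT_model class.
Proof.
  split; [| split]; intros; symmetry;
    [apply LT_otm_class | apply LT_cir_class | apply LT_st_class].
Qed.

Lemma NeL_complete phi : Nw_consequence Gamma phi -> D phi.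
Proof.
  intros [L [HL valid]].
  apply LT_perp_Ff, (valid LT LT_model class class_hom).
  intros g Hg; apply LT_perp_Ff, d_hyp, HL, Hg.
Qed.

End Lindenbaum_Tarski.

Theorem theorem4p6 : forall (Gamma : fm -> Prop) (phi : fm),
  NeL_derivable Gamma phi <-> Nw_consequence Gamma phi.
Proof.
  intros Gamma phi; split; [apply NeL_sound | apply NeL_complete].
Qed.
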